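(* Assume the following statement holds: for every base $b>2$, every integer $n$ with $1<n<b$, and every symmetric $(n,b)$-palintiple with carries $c_k,\ldots,c_0$, one has $c_j\equiv 0 \pmod{n-1}$ for all $0\le j\le k$. Then, for integers $b>2$ and $1<n<b$, any two $(n,b)$-palintiples belong to the same class: either both are symmetric, or both are shifted-symmetric, or both are asymmetric.
   Context: Let $b>2$ be an integer base and write $(d_k,d_{k-1},\ldots,d_0)_b=\sum_{j=0}^k d_j b^j$ with $0\le d_j<b$. A natural number $p=(d_k,\ldots,d_0)_b$ with $d_k\neq 0$ and $d_0\neq 0$ that is not a base-$b$ palindrome is an $(n,b)$-palintiple if $(d_k,\ldots,d_0)_b=n\,(d_0,d_1,\ldots,d_k)_b$ for an integer $n$ with $1<n<b$. Its carries $c_0,\ldots,c_{k+1}$ are the carries arising in the base-$b$ multiplication of $(d_0,\ldots,d_k)_b$ by $n$: $c_0=0$ and $n d_{k-j}+c_j=d_j+b\,c_{j+1}$ for $0\le j\le k$ (so $c_{k+1}=0$). The palintiple is symmetric if $c_j=c_{k-j}$ for all $0\le j\le k$, shifted-symmetric if $c_j=c_{k-j+1}$ for all $0\le j\le k$, and asymmetric if it is neither symmetric nor shifted-symmetric. *)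

From mathcomp Require Import all_boot.
Set Implicit Arguments. Unset Strict Implicit. Unset Printing Implicit Defensive.

(* Base-b digits of p, little-endian: [:: d_0; d_1; ...; d_k],
   where k = trunc_log b p (so d_k <> 0 when p > 0). *)
Definition digits (b p : nat) : seq nat :=
  mkseq (fun j => (p %/ b ^ j) %% b) (trunc_log b p).+1.

Definition digval (b : nat) (d : seq nat) : nat :=
  \sum_(j < size d) nth 0 d j * b ^ j.

Definition topk (b p : nat) : nat := (size (digits b p)).-1.

Definition palintiple (n b p : nat) : Prop :=
  let d := digits b p in
  [/\ 0 < p, nth 0 d (topk b p) != 0, nth 0 d 0 != 0,
      rev d != d & p = n * digval b (rev d)].

(* carries of the multiplication of (d_0,...,d_k)_b by n:
   c_0 = 0, c_{j+1} = (n d_{k-j} + c_j) div b  (equivalently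
   n d_{k-j} + c_j = d_j + b c_{j+1} for a palintiple). *)
Fixpoint carry (n b p j : nat) : nat :=
  match j with
  | 0 => 0
  | j'.+1 => (n * nth 0 (digits b p) (topk b p - j') + carry n b p j') %/ b
  end.

Definition symmetric_pal (n b p : nat) : Prop :=
  forall j, j <= topk b p -> carry n b p j = carry n b p (topk b p - j).

Definition shifted_symmetric_pal (n b p : nat) : Prop :=
  forall j, j <= topk b p -> carry n b p j = carry n b p (topk b p - j + 1).

Definition asymmetric_pal (n b p : nat) : Prop :=
  ~ symmetric_pal n b p /\ ~ shifted_symmetric_pal n b p.

(* Along the carries of an (n,b)-palintiple, n d_(k-j) + c_j = d_j + b c_(j+1)
   with 0 <= c_j < n and c_0 = c_(k+1) = 0.  Pairing the equations at j and
   k - j shows that the class of a palintiple is decided by n and b alone: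
   - if n+1 divides b, then c_j = c_(k-j) mod n+1, hence c_j = c_(k-j);
   - if g = gcd(n^2-1, b-n) >= n, then the congruence c_j = c_(k+1-j) mod g
     propagates from j = 0, hence c_j = c_(k+1-j).
   Conversely the equations at j = 0 and j = k give (n^2-1) d_0 = b c_1 when
   c_k = 0 (symmetric case) and (n^2-1) d_0 = (b-n) c_1 when c_k = c_1
   (shifted case).  With c_1 = 0 mod n-1 the first forces c_1 = n-1 and
   b = (n+1) d_0; in the second, n^2-1 divides g c_1 with 0 < c_1 < n, so
   g > n. *)

From mathcomp Require Import all_boot ssralg ssrint intdiv zify ring.
Set Implicit Arguments. Unset Strict Implicit. Unset Printing Implicit Defensive.
Import GRing.Theory.

Lemma digval_cons b x s : digval b (x :: s) = x + b * digval b s.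
Proof.
rewrite /digval big_ord_recl /= expn0 muln1 big_distrr; congr (_ + _).
by apply: eq_bigr => i _; rewrite expnS mulnCA.
Qed.

Lemma digit_digval b s j : 0 < b -> {in s, forall x, x < b} ->
  digval b s %/ b ^ j %% b = nth 0 s j.
Proof.
move=> b_gt0; elim: s j => [|x s IH] j digits_lt_b.
  by rewrite /digval big_ord0 div0n mod0n nth_nil.
have x_lt_b : x < b by apply: digits_lt_b; rewrite mem_head.
rewrite digval_cons; case: j => [|j] /=.
  by rewrite expn0 divn1 addnC mulnC modnMDl modn_small.
rewrite expnS divnMA mulnC divnDMl // (divn_small x_lt_b) add0n.
by apply: IH => y s_y; apply: digits_lt_b; rewrite inE s_y orbT.
Qed.

(* The carry into position j of the schoolbook product n * r in base b. *)
Definition mul_carry (n b r j : nat) : nat := n * (r %% b ^ j) %/ b ^ j.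

Lemma mul_carry0 n b r : mul_carry n b r 0 = 0.
Proof. by rewrite /mul_carry expn0 modn1 muln0. Qed.

Lemma mul_carry_lt n b r j : 0 < n -> 0 < b -> mul_carry n b r j < n.
Proof.
move=> n_gt0 b_gt0; have bj_gt0 : 0 < b ^ j by rewrite expn_gt0 b_gt0.
by rewrite /mul_carry ltn_divLR // ltn_pmul2l // ltn_pmod.
Qed.

Lemma divn_mul_exp n b r j : 0 < b ->
  (n * r) %/ b ^ j = n * (r %/ b ^ j) + mul_carry n b r j.
Proof.
move=> b_gt0; have bj_gt0 : 0 < b ^ j by rewrite expn_gt0 b_gt0.
by rewrite {1}(divn_eq r (b ^ j)) mulnDr mulnA divnMDl.
Qed.

Lemma mul_carry_digit n b r j : 0 < b ->
  n * (r %/ b ^ j %% b) + mul_carry n b r j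
    = (n * r) %/ b ^ j %% b + b * mul_carry n b r j.+1.
Proof.
move=> b_gt0.
have split_digit m : m %/ b ^ j = m %/ b ^ j.+1 * b + m %/ b ^ j %% b.
  by rewrite expnSr divnMA -divn_eq.
have := split_digit r; have := split_digit (n * r).
have := divn_mul_exp n r j b_gt0; have := divn_mul_exp n r j.+1 b_gt0.
set Q := r %/ b ^ j; set P := (n * r) %/ b ^ j.
set c := mul_carry n b r j; set c' := mul_carry n b r j.+1.
clearbody Q P c c'; nia.
Qed.

Section IntCongruence.
Local Open Scope ring_scope.

Lemma dvdz_carry_step (g n b x y a e a' e' : int) :
  (g %| n * n - 1)%Z -> (g %| b - n)%Z ->
  n * y + a = x + b * e -> n * x + e' = y + b * a' ->
  (g %| a - a')%Z -> (g %| e - e')%Z.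
Proof.
move=> g_nn g_bn eq_x eq_e' g_a.
have -> : e - e' = (n * n - 1) * (y - e) - (b - n) * (n * e + a') + n * (a - a').
  have -> : e' = y + b * a' - n * x by rewrite -eq_e' addrC addKr.
  have -> : x = n * y + a - b * e by rewrite eq_x addrK.
  ring.
by rewrite rpredD ?rpredB // ?(dvdz_mulr _ g_nn) ?(dvdz_mulr _ g_bn)
  ?(dvdz_mull _ g_a).
Qed.

Lemma eq_of_dvdz_sub (g x y : nat) :
  (x < g)%N -> (y < g)%N -> (g %| x%:Z - y%:Z)%Z -> x = y.
Proof.
by move=> x_lt y_lt; rewrite -eqz_mod_dvd !modz_nat => /eqP[]; rewrite !modn_small.
Qed.

End IntCongruence.

Section Carries.

Variables (n b k : nat) (d c : nat -> nat).
Hypothesis digit_eq : forall j, j <= k -> n * d (k - j) + c j = d j + b * c j.+1.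
Hypothesis carry_lt_n : forall j, j <= k.+1 -> c j < n.
Hypothesis carry0 : c 0 = 0.
Hypothesis carry_top : c k.+1 = 0.

Lemma carries_symmetric_of_dvdn : n.+1 %| b -> forall j, j <= k -> c j = c (k - j).
Proof.
move=> /dvdnP[m b_eq] j j_le.
have eq_j := digit_eq j_le.
have eq_kj := digit_eq (leq_subr j k); rewrite subKn // in eq_kj.
have : c j = c (k - j) %[mod n.+1].
  rewrite -(modnMDl (d (k - j) + m * c (k - j).+1) (c j)).
  rewrite -(modnMDl (d j + m * c j.+1) (c (k - j))).
  congr (_ %% _); nia.
have carry_lt_n1 i : i <= k -> c i < n.+1.
  by move=> i_le; rewrite ltnS ltnW // carry_lt_n // leqW.
by rewrite !modn_small ?carry_lt_n1 ?leq_subr.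
Qed.

Lemma carries_shifted_of_dvdz (g : nat) : n <= g ->
  (g %| (n%:Z * n%:Z - 1)%R)%Z -> (g %| (b%:Z - n%:Z)%R)%Z ->
  forall j, j <= k -> c j = c (k - j + 1).
Proof.
move=> n_le_g g_nn g_bn.
have dvd_diff j : j <= k.+1 -> (g %| ((c j)%:Z - (c (k.+1 - j))%:Z)%R)%Z.
  elim: j => [|j IH] j_le; first by rewrite subn0 carry0 carry_top subrr dvdz0.
  have [eq_j eq_kj] := (digit_eq j_le, digit_eq (leq_subr j k)).
  rewrite subKn // in eq_kj; rewrite subSS.
  have := IH (ltnW j_le); rewrite subSn // => IH_j.
  by apply: (dvdz_carry_step (x := d j) (y := d (k - j)) g_nn g_bn _ _ IH_j); lia.
move=> j j_le; rewrite addn1 -subSn //.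
have carry_lt_g i : i <= k.+1 -> c i < g by move/carry_lt_n/leq_trans; apply.
by apply: (eq_of_dvdz_sub (carry_lt_g _ _) (carry_lt_g _ _) (dvd_diff _ _));
  rewrite ?leq_subr ?leqW.
Qed.

Lemma dvdn_of_carries_symmetric :
  1 < n -> 0 < d 0 -> c k = 0 -> c 1 = 0 %[mod n.-1] -> n.+1 %| b.
Proof.
move=> n_gt1 d0_gt0 ck c1_mod.
have eq_0 := digit_eq (leq0n k); rewrite subn0 carry0 addn0 in eq_0.
have eq_k := digit_eq (leqnn k); rewrite subnn ck carry_top muln0 !addn0 in eq_k.
have c1_lt := carry_lt_n (ltn0Sn k).
have c1_gt0 : 0 < c 1 by nia.
have c1_eq : c 1 = n.-1.
  move: c1_mod; rewrite mod0n => /eqP/(dvdn_leq c1_gt0); lia.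
apply/dvdnP; exists (d 0).
apply/eqP; rewrite -(eqn_pmul2l (_ : 0 < n.-1)); last by lia.
by apply/eqP; rewrite -c1_eq; nia.
Qed.

Lemma gcdn_gt_of_carries_shifted :
  1 < n -> 0 < d 0 -> c k = c 1 -> n < gcdn (n * n - 1) (b - n).
Proof.
move=> n_gt1 d0_gt0 ck.
have eq_0 := digit_eq (leq0n k); rewrite subn0 carry0 addn0 in eq_0.
have eq_k := digit_eq (leqnn k); rewrite subnn ck carry_top muln0 !addn0 in eq_k.
have c1_lt := carry_lt_n (ltn0Sn k).
have c1_gt0 : 0 < c 1 by nia.
have key : (n * n - 1) * d 0 = (b - n) * c 1 by nia.
have : n * n - 1 %| gcdn (n * n - 1) (b - n) * c 1.
  by rewrite muln_gcdl dvdn_gcd dvdn_mulr //= -key dvdn_mulr.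
have nn_gt0 : 0 < n * n - 1 by nia.
move/dvdn_leq; rewrite muln_gt0 gcdn_gt0 nn_gt0 c1_gt0 => /(_ isT).
move: (gcdn _ _) => g nn_le.
have nn_eq : n * n - 1 = n.-1 * n.+1 by nia.
have c1_le : c 1 <= n.-1 by rewrite -ltnS prednK // ltnW.
rewrite -(leq_pmul2l (_ : 0 < n.-1)) -?nn_eq; last by lia.
by rewrite (leq_trans nn_le) // mulnC leq_mul2r c1_le orbT.
Qed.

End Carries.

Lemma topkE b p : topk b p = trunc_log b p.
Proof. by rewrite /topk size_mkseq. Qed.

Lemma size_digits b p : size (digits b p) = (topk b p).+1.
Proof. by rewrite topkE size_mkseq. Qed.

Lemma nth_digits b p j : j <= topk b p -> nth 0 (digits b p) j = p %/ b ^ j %% b.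
Proof. by rewrite topkE => j_le; rewrite nth_mkseq. Qed.

Section Palintiple.

Variables n b p : nat.
Hypotheses (n_bounds : 1 < n < b) (pal : palintiple n b p).

Local Notation k := (topk b p).
Local Notation d := (nth 0 (digits b p)).
Local Notation c := (carry n b p).
Let r := digval b (rev (digits b p)).

Let n_gt1 : 1 < n. Proof. by case/andP: n_bounds. Qed.
Let n_lt_b : n < b. Proof. by case/andP: n_bounds. Qed.
Let b_gt1 : 1 < b. Proof. exact: ltn_trans n_lt_b. Qed.
Let b_gt0 : 0 < b. Proof. exact: ltnW. Qed.

Let pal_mul : p = n * r. Proof. by case: pal. Qed.

Let digit0_gt0 : 0 < d 0. Proof. by case: pal => _ _; rewrite lt0n. Qed.

Lemma palintiple_topk_gt0 : 0 < k.
Proof.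
case: pal => _ _ _ rev_neq _; rewrite lt0n; apply: contra_neq rev_neq => k0.
by have := size_digits b p; rewrite k0; case: (digits b p) => [|x []].
Qed.

Let rev_digit j : j <= k -> r %/ b ^ j %% b = d (k - j).
Proof.
move=> j_le; rewrite digit_digval // ?nth_rev ?size_digits ?subSS //.
by move=> x; rewrite mem_rev => /mapP[i _ ->]; apply: ltn_pmod.
Qed.

Let carry_mul_carry j : j <= k.+1 -> c j = mul_carry n b r j.
Proof.
elim: j => [|j IH] j_le; first by rewrite mul_carry0.
rewrite /= IH 1?ltnW // -rev_digit // mul_carry_digit //.
by rewrite [b * _]mulnC divnDMl // divn_small ?ltn_pmod.
Qed.

Lemma palintiple_carry_eq j : j <= k -> n * d (k - j) + c j = d j + b * c j.+1.
Proof.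
move=> j_le; rewrite -rev_digit // !carry_mul_carry ?(leqW j_le) //.
by rewrite mul_carry_digit // -pal_mul nth_digits.
Qed.

Lemma carry_lt j : j <= k.+1 -> c j < n.
Proof. by move=> j_le; rewrite carry_mul_carry // mul_carry_lt // ltnW. Qed.

Lemma palintiple_carry_top : c k.+1 = 0.
Proof.
have := divn_mul_exp n r k.+1 b_gt0.
rewrite -pal_mul divn_small; last by rewrite topkE trunc_log_ltn.
by rewrite -carry_mul_carry // => /esym/eqP; rewrite addn_eq0 => /andP[_ /eqP].
Qed.

Lemma dvdn_symmetric_pal : n.+1 %| b -> symmetric_pal n b p.
Proof.
exact: carries_symmetric_of_dvdn palintiple_carry_eq carry_lt (erefl 0)
  palintiple_carry_top.
Qed.

Lemma symmetric_pal_dvdn :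
  symmetric_pal n b p -> carry n b p 1 = 0 %[mod n.-1] -> n.+1 %| b.
Proof.
move=> sym c1_mod.
apply: (dvdn_of_carries_symmetric palintiple_carry_eq carry_lt (erefl 0)
  palintiple_carry_top n_gt1 digit0_gt0) => //.
by rewrite sym // subnn.
Qed.

Lemma shifted_symmetric_palP :
  shifted_symmetric_pal n b p <-> n < gcdn (n * n - 1) (b - n).
Proof.
split=> [sh | g_gt].
  apply: (gcdn_gt_of_carries_shifted palintiple_carry_eq carry_lt (erefl 0)
    palintiple_carry_top n_gt1 digit0_gt0).
  by rewrite sh // subnn.
apply: (carries_shifted_of_dvdz palintiple_carry_eq carry_lt (erefl 0)
  palintiple_carry_top (ltnW g_gt)).
- by rewrite -PoszM subzn ?muln_gt0 ?(ltnW n_gt1) //; apply: dvdn_gcdl.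
- by rewrite subzn ?(ltnW n_lt_b) //; apply: dvdn_gcdr.
Qed.

End Palintiple.

Theorem corollary3 :
  (forall b n p, 2 < b -> 1 < n < b -> palintiple n b p -> symmetric_pal n b p ->
     forall j, j <= topk b p -> carry n b p j = 0 %[mod n.-1]) ->
  forall b n p q, 2 < b -> 1 < n < b -> palintiple n b p -> palintiple n b q ->
    [\/ symmetric_pal n b p /\ symmetric_pal n b q,
        shifted_symmetric_pal n b p /\ shifted_symmetric_pal n b q
      | asymmetric_pal n b p /\ asymmetric_pal n b q].
Proof.
move=> carry_mod b n p q b_gt2 n_bounds pal_p pal_q.
have symmetricE x : palintiple n b x -> symmetric_pal n b x <-> n.+1 %| b.
  move=> pal_x; split=> [sym_x|]; last exact: dvdn_symmetric_pal.
  apply: (symmetric_pal_dvdn n_bounds pal_x sym_x).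
  exact: carry_mod b_gt2 n_bounds pal_x sym_x 1 (palintiple_topk_gt0 pal_x).
have shiftedE x := shifted_symmetric_palP n_bounds (p := x).
have [dvd_b | ndvd_b] := boolP (n.+1 %| b).
  by apply: Or31; split; apply/symmetricE.
have [g_gt | g_le] := ltnP n (gcdn (n * n - 1) (b - n)).
  by apply: Or32; split; apply/shiftedE.
have asym x : palintiple n b x -> asymmetric_pal n b x.
  move=> pal_x; split=> [/(symmetricE x pal_x) | /(shiftedE x pal_x)].
    exact/negP.
  by rewrite ltnNge g_le.
by apply: Or33; split; apply: asym.
Qed.
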